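(* For every positive integer $k$ and every cell $c$ of the Aztec diamond $\operatorname{AD}(3k-2)$, the set $\operatorname{AD}(3k-2)\setminus\{c\}$ can be partitioned into L-trominoes (i.e. $\operatorname{AD}(3k-2)$ with one defect has a cover).
   Context: A cell is a unit square $[i,i+1]\times[j,j+1]$ with $i,j\in\mathbb{Z}$. An L-tromino is a set of three cells equal to a $2\times 2$ block of cells with one cell removed. The Aztec diamond $\operatorname{AD}(n)$ is the union of the cells $[a,a+1]\times[b,b+1]$, $a,b\in\mathbb{Z}$, lying completely inside $\{(x,y): |x|+|y|\le n+1\}$. *)

From Stdlib Require Import ZArith List.
Open Scope Z_scope.

(* The cell [a,a+1] x [b,b+1] is represented by its lower-left corner (a,b). *)
Definition cell := (Z * Z)%type.

(* The cell (a,b) lies completely inside {(x,y) : |x|+|y| <= n+1} iff all four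
   corners do, i.e. max(|a|,|a+1|) + max(|b|,|b+1|) <= n+1. *)
Definition in_AD (n : nat) (c : cell) : Prop :=
  Z.max (Z.abs (fst c)) (Z.abs (fst c + 1)) + Z.max (Z.abs (snd c)) (Z.abs (snd c + 1))
  <= Z.of_nat n + 1.

Definition in_block (i j : Z) (p : cell) : Prop :=
  (fst p = i \/ fst p = i + 1) /\ (snd p = j \/ snd p = j + 1).

Definition is_L_tromino (S : cell -> Prop) : Prop :=
  exists (i j : Z) (r : cell), in_block i j r /\
    forall p, S p <-> (in_block i j p /\ p <> r).

Definition L_tromino_partition (X : cell -> Prop) : Prop :=
  exists T : list (cell -> Prop),
    Forall is_L_tromino T /\
    (forall p, X p <-> exists t, In t T /\ t p) /\
    (forall (i j : nat) (p : cell), (i < j < length T)%nat ->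
        ~ (nth i T (fun _ => False) p /\ nth j T (fun _ => False) p)).

From Stdlib Require Import ZArith List Lia Bool.
Import ListNotations.
Open Scope Z_scope.

(* The copy of AD(n) translated three cells to the right lies inside AD(n+3) and is flush
   with its right boundary.  What remains, the crescent, consists of a cap of six cells at
   the top and at the bottom and of slanted bands of width six along the left boundary;
   these bands split into 2x6 bricks, and caps and bricks are unions of L-trominoes.  Up to
   the symmetries of the diamond the defect (a,b) satisfies 0 <= b <= a, and then for n >= 3
   it lies in the translated copy, so a tiling of AD(n) minus one cell yields one of
   AD(n+3) minus one cell.  The base cases AD(1) and AD(4) are checked on explicit tilings. *)

Lemma tiling_ext (X Y : cell -> Prop) :
  (forall p, X p <-> Y p) -> L_tromino_partition X -> L_tromino_partition Y.
Proof.
  intros HXY [T [HT [Hcov Hdisj]]].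
  exists T; repeat split; auto.
  - intros HY; apply Hcov, HXY, HY.
  - intros Hp; apply HXY, Hcov, Hp.
Qed.

Lemma tiling_empty : L_tromino_partition (fun _ => False).
Proof.
  exists []; repeat split; [constructor | tauto | intros [t [[] _]] | ].
  intros i j p Hij; simpl in Hij; lia.
Qed.

Lemma tiling_tromino (X : cell -> Prop) : is_L_tromino X -> L_tromino_partition X.
Proof.
  intros HX; exists [X]; repeat split.
  - constructor; [exact HX | constructor].
  - intros Hp; exists X; simpl; auto.
  - intros [t [[<- | []] Ht]]; exact Ht.
  - intros i j p Hij; simpl in Hij; lia.
Qed.

Lemma tiling_union (X Y : cell -> Prop) :
  L_tromino_partition X -> L_tromino_partition Y -> (forall p, X p -> Y p -> False) ->
  L_tromino_partition (fun p => X p \/ Y p).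
Proof.
  intros [T1 [F1 [C1 D1]]] [T2 [F2 [C2 D2]]] Hdisj.
  exists (T1 ++ T2); split; [apply Forall_app; auto | split].
  - intros p; rewrite C1, C2; split.
    + intros [[t [Ht Hp]] | [t [Ht Hp]]]; exists t; split; auto; apply in_or_app; auto.
    + intros [t [Ht Hp]]; apply in_app_or in Ht as [Ht | Ht]; [left | right]; eauto.
  - intros i j p Hij [Hi Hj]; rewrite length_app in Hij.
    destruct (Nat.lt_ge_cases j (length T1)), (Nat.lt_ge_cases i (length T1)); try lia.
    + rewrite app_nth1 in Hi, Hj by lia; exact (D1 i j p ltac:(lia) (conj Hi Hj)).
    + rewrite app_nth1 in Hi by lia; rewrite app_nth2 in Hj by lia.
      apply (Hdisj p); [apply C1; exists (nth i T1 (fun _ => False)) |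
        apply C2; exists (nth (j - length T1) T2 (fun _ => False))];
        split; auto; apply nth_In; lia.
    + rewrite app_nth2 in Hi, Hj by lia.
      exact (D2 (i - length T1) (j - length T1) p ltac:(lia) (conj Hi Hj))%nat.
Qed.

Lemma tiling_symmetry (f g : cell -> cell) (blk : Z -> Z -> cell) (X : cell -> Prop) :
  (forall p, g (f p) = p) -> (forall p, f (g p) = p) ->
  (forall i j p, in_block i j (f p) <-> in_block (fst (blk i j)) (snd (blk i j)) p) ->
  L_tromino_partition X -> L_tromino_partition (fun p => X (f p)).
Proof.
  intros gf fg Hblk [T [HT [Hcov Hdisj]]].
  exists (map (fun t p => t (f p)) T); repeat split.
  - apply Forall_map; eapply Forall_impl; [| exact HT].
    intros t [i [j [r [Hr Ht]]]].
    exists (fst (blk i j)), (snd (blk i j)), (g r); split; [apply Hblk; rewrite fg; exact Hr |].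
    intros p; cbv beta; rewrite Ht; split; intros [Hp Hpr]; split; try apply Hblk, Hp.
    + intros ->; apply Hpr, fg.
    + intros <-; apply Hpr; rewrite gf; reflexivity.
  - intros Hp; apply Hcov in Hp as [t [Ht Hp]].
    exists (fun p => t (f p)); split; auto; apply (in_map (fun t p => t (f p))), Ht.
  - intros [t [Ht Hp]]; apply in_map_iff in Ht as [t0 [<- Ht0]]; apply Hcov; eauto.
  - intros i j p Hij; rewrite length_map in Hij.
    rewrite !(map_nth (fun t p => t (f p)) T (fun _ => False)).
    exact (Hdisj i j (f p) Hij).
Qed.

Definition shift (u v : Z) (p : cell) : cell := (fst p - u, snd p - v).
Definition mirror (p : cell) : cell := (- fst p - 1, snd p).
Definition swap (p : cell) : cell := (snd p, fst p).

Lemma tiling_shift u v X :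
  L_tromino_partition X -> L_tromino_partition (fun p => X (shift u v p)).
Proof.
  apply (tiling_symmetry _ (shift (- u) (- v)) (fun i j => (i + u, j + v)));
    [intros [a b] .. | intros i j [a b]]; unfold shift, in_block; simpl; try f_equal; lia.
Qed.

Lemma tiling_mirror X : L_tromino_partition X -> L_tromino_partition (fun p => X (mirror p)).
Proof.
  apply (tiling_symmetry _ mirror (fun i j => (- i - 2, j)));
    [intros [a b] .. | intros i j [a b]]; unfold mirror, in_block; simpl; try f_equal; lia.
Qed.

Lemma tiling_swap X : L_tromino_partition X -> L_tromino_partition (fun p => X (swap p)).
Proof.
  apply (tiling_symmetry _ swap (fun i j => (j, i)));
    [intros [a b] .. | intros i j [a b]]; unfold swap, in_block; simpl; tauto.
Qed.

(* [in_AD n] is convertible to [diamond (Z.of_nat n)]. *)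
Definition diamond (n : Z) (c : cell) : Prop :=
  Z.max (Z.abs (fst c)) (Z.abs (fst c + 1)) + Z.max (Z.abs (snd c)) (Z.abs (snd c + 1))
  <= n + 1.

Definition punctured (n : Z) (c : cell) (p : cell) : Prop := diamond n p /\ p <> c.

(* Of the two columns [x] and [- x - 1] exchanged by [mirror], the nonnegative one. *)
Definition zfold (x : Z) : Z := Z.max x (- x - 1).

Lemma diamond_zfold n a b : diamond n (a, b) <-> zfold a + zfold b <= n - 1.
Proof. unfold diamond, zfold; simpl; lia. Qed.

Lemma zfold_nonneg x : 0 <= x -> zfold x = x.
Proof. unfold zfold; lia. Qed.

Lemma zfold_neg x : x < 0 -> zfold x = - x - 1.
Proof. unfold zfold; lia. Qed.

Ltac zfold_cases x :=
  destruct (Z_le_gt_dec 0 x); [rewrite (zfold_nonneg x) by lia | rewrite (zfold_neg x) by lia].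

Lemma punctured_mirror n a b :
  L_tromino_partition (punctured n (a, b)) -> L_tromino_partition (punctured n (- a - 1, b)).
Proof.
  intros H; apply tiling_mirror in H; revert H; apply tiling_ext.
  intros [x y]; unfold punctured, mirror; simpl; rewrite !diamond_zfold, !(@pair_equal_spec Z Z).
  unfold zfold; lia.
Qed.

Lemma punctured_swap n a b :
  L_tromino_partition (punctured n (a, b)) -> L_tromino_partition (punctured n (b, a)).
Proof.
  intros H; apply tiling_swap in H; revert H; apply tiling_ext.
  intros [x y]; unfold punctured, swap; simpl; rewrite !diamond_zfold, !(@pair_equal_spec Z Z).
  lia.
Qed.

Lemma punctured_zfold_fst n a b :
  L_tromino_partition (punctured n (zfold a, b)) -> L_tromino_partition (punctured n (a, b)).
Proof.
  unfold zfold; destruct (Z_le_gt_dec 0 a).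
  - rewrite Z.max_l by lia; auto.
  - rewrite Z.max_r by lia; intros H; apply punctured_mirror in H.
    replace (- (- a - 1) - 1) with a in H by lia; exact H.
Qed.

Lemma punctured_wlog n :
  (forall a b, 0 <= b <= a -> diamond n (a, b) -> L_tromino_partition (punctured n (a, b))) ->
  forall c, diamond n c -> L_tromino_partition (punctured n c).
Proof.
  intros Hrep [a b] Hc.
  apply punctured_zfold_fst, punctured_swap, punctured_zfold_fst, punctured_swap.
  rewrite diamond_zfold in Hc.
  assert (Hfold : forall x, 0 <= zfold x) by (intros; unfold zfold; lia).
  destruct (Z_le_gt_dec (zfold b) (zfold a)).
  - apply Hrep; [split; auto | rewrite diamond_zfold; unfold zfold in *; lia].
  - apply punctured_swap, Hrep; [split; auto; lia | rewrite diamond_zfold; unfold zfold in *; lia].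
Qed.

Definition cell_eqb (p q : cell) : bool := (fst p =? fst q) && (snd p =? snd q).

Definition in_blockb (i j : Z) (p : cell) : bool :=
  ((fst p =? i) || (fst p =? i + 1)) && ((snd p =? j) || (snd p =? j + 1)).

Definition block_cells (i j : Z) : list cell := [(i, j); (i + 1, j); (i, j + 1); (i + 1, j + 1)].

Lemma cell_eqb_spec p q : cell_eqb p q = true <-> p = q.
Proof.
  destruct p, q; unfold cell_eqb; simpl.
  rewrite andb_true_iff, !Z.eqb_eq, (@pair_equal_spec Z Z); reflexivity.
Qed.

Lemma in_blockb_spec i j p : in_blockb i j p = true <-> in_block i j p.
Proof.
  unfold in_blockb, in_block; rewrite andb_true_iff, !orb_true_iff, !Z.eqb_eq; reflexivity.
Qed.

Lemma in_block_cells i j p : in_block i j p -> In p (block_cells i j).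
Proof. destruct p as [a b]; unfold in_block; simpl; intros [[-> | ->] [-> | ->]]; tauto. Qed.

(* An L-tromino is encoded by the lower-left cell of its 2x2 block and its missing cell. *)
Definition tromino_at (s : cell * cell) (p : cell) : bool :=
  in_blockb (fst (fst s)) (snd (fst s)) p && negb (cell_eqb p (snd s)).

Fixpoint peel (B : list cell) (f : cell -> bool) (L : list (cell * cell)) : bool :=
  match L with
  | [] => forallb (fun p => negb (f p)) B
  | s :: L' =>
      in_blockb (fst (fst s)) (snd (fst s)) (snd s) &&
      forallb (fun p => negb (tromino_at s p) || f p) (block_cells (fst (fst s)) (snd (fst s))) &&
      peel B (fun p => f p && negb (tromino_at s p)) L'
  end.

Lemma peel_sound B L : forall f : cell -> bool,
  (forall p, f p = true -> In p B) -> peel B f L = true ->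
  L_tromino_partition (fun p => f p = true).
Proof.
  induction L as [| s L IH]; intros f HB Hpeel; cbn [peel] in Hpeel.
  - apply (tiling_ext (fun _ => False)); [| exact tiling_empty].
    intros p; split; [tauto | intros Hp].
    rewrite forallb_forall in Hpeel; specialize (Hpeel p (HB p Hp)).
    rewrite Hp in Hpeel; discriminate.
  - rewrite !andb_true_iff, forallb_forall in Hpeel; destruct Hpeel as [[Hr Hsub] Hrest].
    set (i := fst (fst s)) in *; set (j := snd (fst s)) in *; set (r := snd s) in *.
    set (t := tromino_at s) in *.
    assert (Ht : forall p, t p = true <-> in_block i j p /\ p <> r).
    { intros p; unfold t, tromino_at.
      rewrite andb_true_iff, in_blockb_spec, negb_true_iff, <- not_true_iff_false, cell_eqb_spec.
      reflexivity. }
    assert (Htf : forall p, t p = true -> f p = true).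
    { intros p Hp; specialize (Hsub p (in_block_cells i j p (proj1 (proj1 (Ht p) Hp)))).
      rewrite Hp in Hsub; exact Hsub. }
    apply (tiling_ext (fun p => t p = true \/ (f p && negb (t p)) = true)).
    + intros p; specialize (Htf p); destruct (t p), (f p); simpl; intuition.
    + apply tiling_union.
      * apply tiling_tromino; exists i, j, r; split; [apply in_blockb_spec, Hr | exact Ht].
      * apply IH; [| exact Hrest].
        intros p Hp; apply HB; apply andb_true_iff in Hp; tauto.
      * intros p Hp; rewrite Hp, andb_false_r; discriminate.
Qed.

Definition zseq (x : Z) (n : nat) : list Z := map (fun k => x + Z.of_nat k) (seq 0 n).

Definition box (x y : Z) (w h : nat) : list cell := list_prod (zseq x w) (zseq y h).

Lemma in_box x y w h a b :
  x <= a < x + Z.of_nat w -> y <= b < y + Z.of_nat h -> In (a, b) (box x y w h).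
Proof.
  assert (Hseq : forall z n c, z <= c < z + Z.of_nat n -> In c (zseq z n)).
  { intros z n c Hc; apply in_map_iff; exists (Z.to_nat (c - z)); rewrite in_seq; lia. }
  intros; apply in_prod; auto.
Qed.

Lemma tiling_of_peel (X : cell -> Prop) (f : cell -> bool) B L :
  (forall a b, X (a, b) <-> f (a, b) = true) -> (forall a b, X (a, b) -> In (a, b) B) ->
  peel B f L = true -> L_tromino_partition X.
Proof.
  intros HXf HXB Hpeel.
  apply (tiling_ext (fun p => f p = true)); [intros [a b]; symmetry; apply HXf |].
  apply (peel_sound B L); [intros [a b] Hp; apply HXB, HXf, Hp | exact Hpeel].
Qed.

Ltac bool_to_arith := repeat rewrite ?andb_true_iff, ?orb_true_iff, ?Z.leb_le, ?Z.eqb_eq.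

Definition stair (x y d m : Z) (p : cell) : Prop :=
  y <= snd p < y + 2 * m /\ x + d * (snd p - y) <= fst p <= x + d * (snd p - y) + 5.

Definition cap_up (x y : Z) (p : cell) : Prop :=
  (snd p = y /\ x <= fst p <= x + 3) \/ (snd p = y + 1 /\ x + 1 <= fst p <= x + 2).

Definition cap_down (x y : Z) (p : cell) : Prop :=
  (snd p = y + 1 /\ x <= fst p <= x + 3) \/ (snd p = y /\ x + 1 <= fst p <= x + 2).

Definition brick_tiling (d : Z) : list (cell * cell) :=
  match d with
  | Z.neg _ => [((-1, 0), (-1, 0)); ((1, 0), (2, 0)); ((2, 0), (2, 1)); ((4, 0), (5, 1))]
  | Z0 => [((0, 0), (1, 0)); ((1, 0), (1, 1)); ((3, 0), (4, 0)); ((4, 0), (4, 1))]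
  | Z.pos _ => [((0, 0), (0, 1)); ((2, 0), (3, 0)); ((3, 0), (3, 1)); ((5, 0), (6, 0))]
  end.

Lemma tiling_brick d : -1 <= d <= 1 -> L_tromino_partition (stair 0 0 d 1).
Proof.
  intros Hd.
  apply (tiling_of_peel _ (fun p => (0 <=? snd p) && (snd p <=? 1) &&
           (d * snd p <=? fst p) && (fst p <=? d * snd p + 5)) (box (-1) 0 8 2) (brick_tiling d)).
  - intros a b; unfold stair; simpl; bool_to_arith; rewrite Z.sub_0_r; lia.
  - intros a b Hab; apply in_box; unfold stair in Hab; simpl in *; nia.
  - assert (Hd' : d = -1 \/ d = 0 \/ d = 1) by lia.
    destruct Hd' as [-> | [-> | ->]]; vm_compute; reflexivity.
Qed.

Lemma tiling_stair x y d m : -1 <= d <= 1 -> 0 <= m -> L_tromino_partition (stair x y d m).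
Proof.
  intros Hd Hm; assert (Hd' : d = -1 \/ d = 0 \/ d = 1) by lia.
  rewrite <- (Z2Nat.id m Hm); induction (Z.to_nat m) as [| k IH].
  - apply (tiling_ext (fun _ => False)); [| exact tiling_empty].
    intros [a b]; unfold stair; simpl; lia.
  - set (h := 2 * Z.of_nat k).
    apply (tiling_ext (fun p => stair x y d (Z.of_nat k) p \/
                                stair 0 0 d 1 (shift (x + d * h) (y + h) p))).
    + intros [a b]; unfold stair, shift, h; cbn [fst snd]; destruct Hd' as [-> | [-> | ->]]; lia.
    + apply tiling_union; [exact IH | apply tiling_shift, tiling_brick, Hd |].
      intros [a b]; unfold stair, shift, h; cbn [fst snd]; destruct Hd' as [-> | [-> | ->]]; lia.
Qed.

Lemma tiling_cap_up x y : L_tromino_partition (cap_up x y).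
Proof.
  apply (tiling_ext (fun p => cap_up 0 0 (shift x y p)));
    [intros [a b]; unfold cap_up, shift; simpl; lia | apply tiling_shift].
  apply (tiling_of_peel _ (fun p => (snd p =? 0) && (0 <=? fst p) && (fst p <=? 3) ||
           (snd p =? 1) && (1 <=? fst p) && (fst p <=? 2)) (box 0 0 4 2)
           [((0, 0), (0, 1)); ((2, 0), (3, 1))]).
  - intros a b; unfold cap_up; simpl; bool_to_arith; lia.
  - intros a b Hab; apply in_box; unfold cap_up in Hab; simpl in *; lia.
  - vm_compute; reflexivity.
Qed.

Lemma tiling_cap_down x y : L_tromino_partition (cap_down x y).
Proof.
  apply (tiling_ext (fun p => cap_down 0 0 (shift x y p)));
    [intros [a b]; unfold cap_down, shift; simpl; lia | apply tiling_shift].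
  apply (tiling_of_peel _ (fun p => (snd p =? 1) && (0 <=? fst p) && (fst p <=? 3) ||
           (snd p =? 0) && (1 <=? fst p) && (fst p <=? 2)) (box 0 0 4 2)
           [((0, 0), (0, 0)); ((2, 0), (3, 0))]).
  - intros a b; unfold cap_down; simpl; bool_to_arith; lia.
  - intros a b Hab; apply in_box; unfold cap_down in Hab; simpl in *; lia.
  - vm_compute; reflexivity.
Qed.

Definition crescent (n : Z) (p : cell) : Prop := diamond (n + 3) p /\ ~ diamond n (shift 3 0 p).

Lemma crescent_odd m p : 0 <= m ->
  crescent (2 * m + 1) p <->
  cap_up (-2) (2 * m + 2) p \/ cap_down (-2) (- 2 * m - 4) p \/
  stair (- 2 * m - 4) 0 1 (m + 1) p \/ stair (-3) (- 2 * m - 2) (-1) (m + 1) p.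
Proof.
  intros Hm; destruct p as [a b]; unfold crescent, shift; cbn [fst snd].
  rewrite !diamond_zfold; unfold cap_up, cap_down, stair; cbn [fst snd].
  rewrite Z.sub_0_r; zfold_cases a; zfold_cases (a - 3); zfold_cases b; split; intros; lia.
Qed.

Lemma crescent_even m p : 0 <= m ->
  crescent (2 * m) p <->
  cap_up (-2) (2 * m + 1) p \/ cap_down (-2) (- 2 * m - 3) p \/
  stair (- 2 * m - 2) 1 1 m p \/ stair (-3) (- 2 * m - 1) (-1) m p \/
  stair (- 2 * m - 3) (-1) 0 1 p.
Proof.
  intros Hm; destruct p as [a b]; unfold crescent, shift; cbn [fst snd].
  rewrite !diamond_zfold; unfold cap_up, cap_down, stair; cbn [fst snd].
  rewrite Z.sub_0_r; zfold_cases a; zfold_cases (a - 3); zfold_cases b; split; intros; lia.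
Qed.

Ltac tile_pieces :=
  first [ apply tiling_cap_up | apply tiling_cap_down | apply tiling_stair; lia
        | apply tiling_union; [tile_pieces | tile_pieces |
            intros [a b]; unfold cap_up, cap_down, stair; cbn [fst snd]; lia] ].

Lemma tiling_crescent n : 0 <= n -> L_tromino_partition (crescent n).
Proof.
  intros Hn; destruct (Z.Even_or_Odd n) as [[m ->] | [m ->]].
  - eapply tiling_ext; [intros p; symmetry; apply crescent_even; lia | tile_pieces].
  - eapply tiling_ext; [intros p; symmetry; apply crescent_odd; lia | tile_pieces].
Qed.

Lemma punctured_step n : 3 <= n ->
  (forall c, diamond n c -> L_tromino_partition (punctured n c)) ->
  forall c, diamond (n + 3) c -> L_tromino_partition (punctured (n + 3) c).
Proof.
  intros Hn IH; apply punctured_wlog; intros a b Hab Hc.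
  assert (Hcopy : diamond n (shift 3 0 (a, b))).
  { revert Hc; unfold shift; cbn [fst snd]; rewrite !diamond_zfold, Z.sub_0_r.
    rewrite (zfold_nonneg a), (zfold_nonneg b) by lia; zfold_cases (a - 3); lia. }
  apply (tiling_ext (fun p => punctured n (shift 3 0 (a, b)) (shift 3 0 p) \/ crescent n p)).
  - intros [x y]; unfold punctured, crescent, shift; cbn [fst snd].
    rewrite !diamond_zfold, !(@pair_equal_spec Z Z), !Z.sub_0_r.
    zfold_cases x; zfold_cases (x - 3); zfold_cases y; lia.
  - apply tiling_union; [apply tiling_shift, IH, Hcopy | apply tiling_crescent; lia |].
    intros p [Hp _] [_ Hq]; exact (Hq Hp).
Qed.

Lemma punctured_AD1 c : diamond 1 c -> L_tromino_partition (punctured 1 c).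
Proof.
  revert c; apply punctured_wlog; intros a b Hab Hc.
  assert (Hab0 : a = 0 /\ b = 0) by (rewrite diamond_zfold in Hc; unfold zfold in Hc; lia).
  destruct Hab0 as [-> ->].
  apply tiling_tromino; exists (-1), (-1), (0, 0); split; [unfold in_block; cbn; lia |].
  intros [x y]; unfold punctured, diamond, in_block; cbn [fst snd].
  rewrite (@pair_equal_spec Z Z); lia.
Qed.

(* Tiles AD(4) except the 2x2 blocks at (1,0) and (2,-1), which share the cell (2,0);
   removing any cell of their union leaves two L-trominoes. *)
Definition AD4_core : list (cell * cell) :=
  [((-4, -1), (-3, -1)); ((-3, -2), (-2, -2)); ((-3, 1), (-3, 2)); ((-2, -3), (-1, -3));
   ((-2, 0), (-2, 1)); ((-1, -4), (0, -3)); ((-1, -1), (-1, 0)); ((-1, 2), (0, 2));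
   ((0, -3), (1, -2)); ((0, 1), (1, 1)); ((1, -2), (2, -1))].

Definition AD4_tiling (a b : Z) : list (cell * cell) :=
  match a, b with
  | 0, 0 => [((-4, -1), (-3, -1)); ((-3, -2), (-2, -2)); ((-3, 1), (-3, 2));
             ((-2, -3), (-1, -3)); ((-2, 0), (-2, 1)); ((-1, -4), (0, -3));
             ((-1, -2), (-1, -2)); ((-1, 2), (0, 2)); ((0, -3), (0, -2)); ((0, 1), (1, 1));
             ((1, -2), (1, -2)); ((1, 0), (2, 0)); ((2, -1), (2, -1))]
  | 1, 0 => AD4_core ++ [((1, 0), (1, 0)); ((2, -1), (2, 0))]
  | 2, 0 => AD4_core ++ [((1, 0), (2, 0)); ((2, -1), (2, 0))]
  | 3, 0 => AD4_core ++ [((1, 0), (2, 0)); ((2, -1), (3, 0))]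
  | 1, 1 => AD4_core ++ [((1, 0), (1, 1)); ((2, -1), (2, 0))]
  | _, _ (* (2, 1) *) => AD4_core ++ [((1, 0), (2, 1)); ((2, -1), (2, 0))]
  end.

Lemma punctured_AD4 c : diamond 4 c -> L_tromino_partition (punctured 4 c).
Proof.
  revert c; apply punctured_wlog; intros a b Hab Hc.
  apply (tiling_of_peel _ (fun p => (Z.max (Z.abs (fst p)) (Z.abs (fst p + 1)) +
           Z.max (Z.abs (snd p)) (Z.abs (snd p + 1)) <=? 5) && negb (cell_eqb p (a, b)))
           (box (-5) (-5) 10 10) (AD4_tiling a b)).
  - intros x y; unfold punctured, diamond.
    rewrite andb_true_iff, Z.leb_le, negb_true_iff, <- not_true_iff_false, cell_eqb_spec.
    reflexivity.
  - intros x y [Hxy _]; apply in_box; unfold diamond in Hxy; cbn [fst snd] in *; lia.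
  - rewrite diamond_zfold in Hc; unfold zfold in Hc.
    assert (Hrep : (a, b) = (0, 0) \/ (a, b) = (1, 0) \/ (a, b) = (2, 0) \/ (a, b) = (3, 0) \/
                   (a, b) = (1, 1) \/ (a, b) = (2, 1)).
    { rewrite !(@pair_equal_spec Z Z); lia. }
    repeat destruct Hrep as [Hrep | Hrep]; injection Hrep as -> ->; vm_compute; reflexivity.
Qed.

Lemma punctured_diamond_tiling k c :
  diamond (3 * Z.of_nat k + 1) c -> L_tromino_partition (punctured (3 * Z.of_nat k + 1) c).
Proof.
  revert c; induction k as [| [| k] IH].
  - exact punctured_AD1.
  - exact punctured_AD4.
  - replace (3 * Z.of_nat (S (S k)) + 1) with (3 * Z.of_nat (S k) + 1 + 3) by lia.
    apply punctured_step; [lia | exact IH].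
Qed.

Theorem corollary4 :
  forall (k : nat), (1 <= k)%nat ->
  forall c : cell, in_AD (3 * k - 2) c ->
    L_tromino_partition (fun p => in_AD (3 * k - 2) p /\ p <> c).
Proof.
  intros k Hk c Hc; destruct k as [| k]; [lia |].
  change (diamond (Z.of_nat (3 * S k - 2)) c) in Hc.
  change (L_tromino_partition (punctured (Z.of_nat (3 * S k - 2)) c)).
  replace (Z.of_nat (3 * S k - 2)) with (3 * Z.of_nat k + 1) in * by lia.
  apply punctured_diamond_tiling, Hc.
Qed.
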